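(* Let $N\ge 1$, $c\in\mathbb{R}$, and consider the manifold of Jacobi parameters $a_1,\dots,a_{N-1}>0$, $b_1,\dots,b_N\in\mathbb{R}$ with $\sum_{j=1}^N b_j=c$, with the Poisson bracket described in the context. Let $P_n$ be the monic orthogonal polynomials defined in the context. Then for every $n=1,2,\dots,N$ and all $x,y$, \[ \{P_n(x),P_n(y)\}=\{P_{n-1}(x),P_{n-1}(y)\}=0, \] \[ 2\{P_n(x),P_{n-1}(y)\} = \frac{P_n(x)P_{n-1}(y)-P_n(y)P_{n-1}(x)}{x-y} - P_{n-1}(x)P_{n-1}(y). \]
   Context: The Poisson bracket on functions of $(a_1,\dots,a_{N-1},b_1,\dots,b_N)$ is the bilinear antisymmetric bracket satisfying the Leibniz rule whose only nonzero brackets among the coordinates are $\{b_k,a_k\}=-\tfrac14 a_k$ for $k=1,\dots,N-1$ and $\{b_k,a_{k-1}\}=\tfrac14 a_{k-1}$ for $k=2,\dots,N$. Brackets of functions depending on auxiliary variables $x,y$ are computed with $x,y$ held fixed; the identity with the difference quotient is understood as an identity of polynomials in $x,y$. The monic polynomials are defined by $P_{-1}=0$, $P_0=1$, $P_{j+1}(x)=(x-b_{j+1})P_j(x)-a_j^2P_{j-1}(x)$; equivalently $P_n(x)=\det(x-J_n)$ where $J_n$ is the $n\times n$ tridiagonal matrix with diagonal $b_1,\dots,b_n$ and off-diagonal entries $a_1,\dots,a_{n-1}$. *)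

From HB Require Import structures.
From mathcomp Require Import all_boot all_order all_algebra.
From mathcomp Require Import reals.
From mathcomp Require Import mpoly.
Set Implicit Arguments. Unset Strict Implicit. Unset Printing Implicit Defensive.
Import Order.TTheory GRing.Theory Num.Theory.
Local Open Scope ring_scope.

(* Ambient coordinates for a given N, as variables of {mpoly R[(2N).+1]}:
     a_k  (k = 1..N-1)  is variable number k-1,
     b_k  (k = 1..N)    is variable number (N-1)+(k-1),
     x                  is variable number 2N-1,
     y                  is variable number 2N.                          *)
Section Jacobi.
Variables (R : realType) (N : nat).
Notation nv := (N.*2).+1.
Notation MP := {mpoly R[nv]}.

Definition ia (k : nat) : 'I_nv := inord k.-1.
Definition ib (k : nat) : 'I_nv := inord (N.-1 + k.-1).
Definition ix : 'I_nv := inord (N.*2.-1).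
Definition iy : 'I_nv := inord (N.*2).

Definition va (k : nat) : MP := 'X_(ia k).
Definition vb (k : nat) : MP := 'X_(ib k).
Definition vx : MP := 'X_ix.
Definition vy : MP := 'X_iy.

(* The Poisson bracket: the unique bilinear antisymmetric biderivation with
   {b_k, a_k} = -a_k/4 (k = 1..N-1), {b_k, a_(k-1)} = a_(k-1)/4 (k = 2..N),
   all other brackets of coordinates (and anything with x, y) being 0:
   {f,g} = sum_{u,v coordinates} (df/du) (dg/dv) {u,v}. *)
Definition pbr (f g : MP) : MP :=
  \sum_(1 <= k < N)
    ( (mderiv (ib k) f * mderiv (ia k) g - mderiv (ia k) f * mderiv (ib k) g)
        * (- (va k * ((4%:R)^-1 : R)%:MP))
    + (mderiv (ib k.+1) f * mderiv (ia k) g - mderiv (ia k) f * mderiv (ib k.+1) g)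
        * (va k * ((4%:R)^-1 : R)%:MP) ).

(* Ppair z j = (P_(j-1)(z), P_j(z)), with P_(-1) = 0, P_0 = 1,
   P_(j+1)(z) = (z - b_(j+1)) P_j(z) - a_j^2 P_(j-1)(z). *)
Fixpoint Ppair (z : MP) (j : nat) : MP * MP :=
  match j with
  | 0 => (0, 1)
  | j'.+1 => let: (p, q) := Ppair z j' in
             (q, (z - vb j'.+1) * q - (if j' is 0 then 0 else va j' ^+ 2) * p)
  end.

Definition P (j : nat) (z : MP) : MP := (Ppair z j).2.

(* Restriction to a point (a, b) of the phase space: the coordinates a_k, b_k
   are replaced by the numbers a k, b k; x, y become the two variables of
   {mpoly R[2]} ('X_0 and 'X_1). *)
Definition evpt_var (a b : nat -> R) (i : 'I_nv) : {mpoly R[2]} :=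
  if (i < N.-1)%N then (a i.+1)%:MP
  else if (i < N.*2.-1)%N then (b (i - N.-1).+1)%:MP
  else if i == ix then 'X_(ord0 : 'I_2) else 'X_(ord_max : 'I_2).

Definition evpt (a b : nat -> R) (f : MP) : {mpoly R[2]} :=
  comp_mpoly [tuple evpt_var a b i | i < nv] f.

End Jacobi.

From HB Require Import structures.
From mathcomp Require Import all_boot all_order all_algebra.
From mathcomp Require Import reals.
From mathcomp Require Import mpoly.
From mathcomp Require Import ring zify.
Import GRing.Theory.
Set Implicit Arguments.
Unset Strict Implicit.
Local Open Scope ring_scope.

(* Write p, p' for P_n(x), P_(n-1)(x) and q, q' for P_n(y), P_(n-1)(y).  The
   bracket is a biderivation for which x and y are Casimirs, and P_n, P_(n-1)
   only involve a_1..a_(n-1), b_1..b_n.  Hence b_(n+1) commutes with p, p', q, q',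
   a_n^2 commutes with p', q', {a_n^2, p} = -a_n^2 p'/2 (because dp/db_n = -p'),
   and {b_(n+1), a_n^2} = a_n^2/2.  Expanding the brackets of
   P_(n+1) = (x - b_(n+1)) p - a_n^2 p' with these rules shows, by induction on n,
     {p, q} = {p', q'} = 0,   {p, q'} = {q, p'},
     (x - y) (2 {p, q'} + p' q') = p q' - q p'.
   These are identities between polynomials in all the coordinates, so neither
   the positivity of the a_k nor the constraint on the sum of the b_k is used. *)

Section BracketRecurrence.
Variables (T : comNzRingType) (br : T -> T -> T) (h : T).
Hypothesis brMl : forall f g k, br (f * g) k = f * br g k + g * br f k.
Hypothesis brBl : forall f g k, br (f - g) k = br f k - br g k.
Hypothesis brC : forall f g, br f g = - br g f.
Hypothesis brxx : forall f, br f f = 0.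
Hypothesis h_half : h + h = 1.

Lemma brMr f g k : br k (f * g) = f * br k g + g * br k f.
Proof. by rewrite brC brMl (brC g) (brC f); ring. Qed.

Lemma brBr f g k : br k (f - g) = br k f - br k g.
Proof. by rewrite brC brBl (brC f) (brC g); ring. Qed.

Lemma br1l k : br 1 k = 0.
Proof. by apply: (@addrI _ (br 1 k)); rewrite addr0 -{3}(mulr1 1) brMl !mul1r. Qed.

Lemma br0l k : br 0 k = 0.
Proof. by rewrite -[X in br X _](subrr 0) brBl subrr. Qed.

Definition step_relations (B A p p' : T) :=
  [/\ br B p = 0, br B p' = 0, br A p' = 0 & br A p = - (h * A * p')].

Definition bracket_relations (z p p' w q q' : T) :=
  [/\ br p q = 0, br p' q' = 0, br p q' = br q p' &
      (z - w) * (2%:R * br p q' + p' * q') = p * q' - q * p'].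

Lemma bracket_relations_init z w : bracket_relations z 1 0 w 1 0.
Proof. by split; rewrite ?br1l ?br0l //; ring. Qed.

Lemma bracket_relations_step z w B A p p' q q' :
  (forall f, br z f = 0) -> (forall f, br w f = 0) -> br B A = h * A ->
  step_relations B A p p' -> step_relations B A q q' ->
  bracket_relations z p p' w q q' ->
  bracket_relations z ((z - B) * p - A * p') p w ((w - B) * q - A * q') q.
Proof.
move=> zC wC BA [Bp Bp' Ap' Ap] [Bq Bq' Aq' Aq] [pq p'q' pq'_sym CD].
have flip f g : br f g = 0 -> br g f = 0 by move=> e; rewrite brC e oppr0.
have Cz f : br f z = 0 by apply/flip.
have Cw f : br f w = 0 by apply/flip.
set P := (z - B) * p - A * p'; set Q := (w - B) * q - A * q'.
have Pq : br P q = A * br q p' + h * A * p' * q'.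
  by rewrite /P brBl !brMl brBl zC Bq (brC p' q) Aq pq; ring.
have Qp : br Q p = A * br q p' + h * A * p' * q'.
  by rewrite /Q brBl !brMl brBl wC Bp (brC q' p) Ap -pq'_sym (flip _ _ pq); ring.
(* Both remaining identities hold only modulo [h + h = 1] and the induction
   hypothesis [CD]: we add to one side multiples of these vanishing quantities. *)
split=> //.
- have -> : 0 = A * (z - w) * br p q' * (h + h - 1)
      + h * A * (p * q' - q * p' - (z - w) * (2%:R * br p q' + p' * q')).
    by rewrite h_half CD !subrr !mulr0 addr0.
  rewrite /P /Q !(brBl, brMl, brBr, brMr).
  rewrite ?(zC, wC, Cz, Cw, brxx, Bp, Bp', Bq, Bq', Ap, Ap', Aq, Aq', BA, pq, p'q').
  rewrite (flip _ _ Bp) (flip _ _ Bp') (flip _ _ Ap').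
  rewrite (brC p A) Ap (brC A B) BA (brC p' q) -pq'_sym.
  ring.
- by rewrite Pq Qp.
have -> : P * q - Q * p = P * q - Q * p
    + A * ((z - w) * (2%:R * br p q' + p' * q') - (p * q' - q * p'))
    + A * (z - w) * p' * q' * (h + h - 1).
  by rewrite CD h_half !subrr !mulr0 !addr0.
by rewrite Pq -pq'_sym /P /Q; ring.
Qed.

End BracketRecurrence.

Lemma mderivXU (R : nzRingType) (n : nat) (i j : 'I_n) :
  mderiv i ('X_j : {mpoly R[n]}) = (j == i)%:R.
Proof.
rewrite mderivX mnm1E; case: eqP => [->|_]; last by rewrite scale0r.
have -> : (U_(i) - U_(i))%MM = 0%MM by apply/mnmP=> k; rewrite mnmBE subnn mnm0E.
by rewrite mpolyX0 scale1r.
Qed.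

Section JacobiBracket.
Variables (R : realType) (N : nat).
Notation nv := (N.*2).+1.
Notation MP := {mpoly R[nv]}.
Notation br := (@pbr R N).

Definition quarter : MP := ((4%:R)^-1 : R)%:MP.
Definition half : MP := ((2%:R)^-1 : R)%:MP.

Lemma quarter_add : quarter + quarter = half.
Proof. by rewrite /quarter /half -mpolyCD; congr (_%:MP); field. Qed.

Lemma half_add : half + half = 1.
Proof. by rewrite /half -mpolyCD -mpolyC1; congr (_%:MP); field. Qed.

Lemma pbrMl f g k : br (f * g) k = f * br g k + g * br f k.
Proof.
rewrite /pbr !mulr_sumr -big_split /=; apply: eq_bigr => j _.
by rewrite !mderivM; ring.
Qed.

Lemma pbrBl f g k : br (f - g) k = br f k - br g k.
Proof. by rewrite /pbr -sumrB; apply: eq_bigr => j _; rewrite !mderivB; ring. Qed.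

Lemma pbrC f g : br f g = - br g f.
Proof. by rewrite /pbr -sumrN; apply: eq_bigr => j _; ring. Qed.

Lemma pbrxx f : br f f = 0.
Proof. by rewrite /pbr big1 // => j _; ring. Qed.

Lemma val_ia k : (k <= N)%N -> nat_of_ord (ia N k) = k.-1.
Proof. by move=> hk; rewrite /ia inordK //; lia. Qed.

Lemma val_ib k : (k <= N.+1)%N -> nat_of_ord (ib N k) = (N.-1 + k.-1)%N.
Proof. by move=> hk; rewrite /ib inordK //; lia. Qed.

Lemma val_ix : nat_of_ord (ix N) = N.*2.-1.
Proof. by rewrite /ix inordK //; lia. Qed.

Lemma val_iy : nat_of_ord (iy N) = N.*2.
Proof. by rewrite /iy inordK //; lia. Qed.

Lemma eq_ia k j : (1 <= k <= N)%N -> (1 <= j <= N)%N ->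
  (ia N k == ia N j) = (k == j).
Proof. by move=> hk hj; rewrite -val_eqE /= !val_ia; [apply/eqP/eqP; lia | lia ..]. Qed.

Lemma eq_ib k j : (1 <= k <= N.+1)%N -> (1 <= j <= N.+1)%N ->
  (ib N k == ib N j) = (k == j).
Proof. by move=> hk hj; rewrite -val_eqE /= !val_ib; [apply/eqP/eqP; lia | lia ..]. Qed.

Lemma ia_neq_ib k j : (1 <= k < N)%N -> (1 <= j <= N.+1)%N ->
  (ia N k == ib N j) = false.
Proof. by move=> hk hj; rewrite -val_eqE /= val_ia ?val_ib; [apply/eqP | ..]; lia. Qed.

Definition jacobi_free (f : MP) :=
  (forall k, (1 <= k < N)%N -> mderiv (ia N k) f = 0) /\
  (forall k, (1 <= k <= N)%N -> mderiv (ib N k) f = 0).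

Lemma pbr_free f g : jacobi_free f -> br f g = 0.
Proof.
move=> [fa fb]; rewrite /pbr big1_seq // => k; rewrite mem_index_iota => hk.
by rewrite fa ?fb //; [ring | lia | lia].
Qed.

Lemma jacobi_free_vx : jacobi_free (vx R N).
Proof.
split=> k hk; rewrite /vx mderivXU -val_eqE /= val_ix ?val_ia ?val_ib; try lia.
all: by case: eqP => //; lia.
Qed.

Lemma jacobi_free_vy : jacobi_free (vy R N).
Proof.
split=> k hk; rewrite /vy mderivXU -val_eqE /= val_iy ?val_ia ?val_ib; try lia.
all: by case: eqP => //; lia.
Qed.

Lemma pbr_va j g : (1 <= j < N)%N ->
  br (va R N j) g = va R N j * quarter * (mderiv (ib N j) g - mderiv (ib N j.+1) g).
Proof.
move=> hj; rewrite /pbr (bigD1_seq j) ?iota_uniq ?mem_index_iota //= big1_seq.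
  by rewrite /va !mderivXU eqxx !ia_neq_ib /quarter /=; [ring | lia ..].
move=> k /andP[kj]; rewrite mem_index_iota => hk.
rewrite /va !mderivXU !ia_neq_ib ?eq_ia; try lia.
by rewrite eq_sym (negbTE kj) /=; ring.
Qed.

Lemma pbr_vb j g : (1 <= j <= N)%N ->
  (forall k, (1 <= k < N)%N -> (j = k \/ j = k.+1) -> mderiv (ia N k) g = 0) ->
  br (vb R N j) g = 0.
Proof.
move=> hj ga; rewrite /pbr big1_seq // => k; rewrite mem_index_iota => hk.
rewrite /vb !mderivXU ![ib N _ == ia N _]eq_sym !ia_neq_ib; try lia.
have [jk|jk] := eqVneq j k; first by rewrite ga /=; [ring | lia | left].
have [jk1|jk1] := eqVneq j k.+1; first by rewrite ga /=; [ring | lia | right].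
by rewrite !eq_ib ?(negbTE jk) ?(negbTE jk1) /=; [ring | lia ..].
Qed.

(* [Pprev 0 z] is P_(-1)(z) = 0, whereas [P 0.-1 z] = P_0(z) = 1. *)
Definition Pprev (n : nat) (z : MP) : MP := (Ppair z n).1.

Definition asq (n : nat) : MP := if n is 0 then 0 else va R N n ^+ 2.

Lemma P_succ n (z : MP) : P n.+1 z = (z - vb R N n.+1) * P n z - asq n * Pprev n z.
Proof. by rewrite /P /Pprev /asq /=; case: (Ppair z n). Qed.

Lemma Pprev_succ n (z : MP) : Pprev n.+1 z = P n z.
Proof. by rewrite /P /Pprev /=; case: (Ppair z n). Qed.

Definition later_coord (m : nat) (i : 'I_nv) :=
  (exists2 k, (1 <= k /\ m <= k < N)%N & i = ia N k) \/
  (exists2 k, (m < k <= N)%N & i = ib N k).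

Lemma later_coord_ib m k : (m < k <= N)%N -> later_coord m (ib N k).
Proof. by right; exists k. Qed.

Lemma later_coord_succ m i : later_coord m.+1 i -> later_coord m i.
Proof. by case=> [[k hk ->]|[k hk ->]]; [left | right]; exists k => //; lia. Qed.

Lemma mderiv_free_later m i z : jacobi_free z -> later_coord m i -> mderiv i z = 0.
Proof. by move=> [za zb] [[k hk ->]|[k hk ->]]; [apply: za | apply: zb]; lia. Qed.

Lemma mderiv_vb_later m i : (m < N)%N -> later_coord m.+1 i ->
  mderiv i (vb R N m.+1) = 0.
Proof.
move=> hm [[k hk ->]|[k hk ->]]; rewrite /vb mderivXU.
  by rewrite eq_sym ia_neq_ib //; lia.
by rewrite eq_ib; [case: eqP => //; lia | lia | lia].
Qed.

Lemma mderiv_asq_later m i : (m < N)%N -> later_coord m.+1 i -> mderiv i (asq m) = 0.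
Proof.
case: m => [|m] hm hi; first exact: mderiv0.
rewrite /asq expr2 mderivM /va mderivXU.
case: hi => [[k hk ->]|[k hk ->]]; last by rewrite ia_neq_ib /=; [ring | lia | lia].
by rewrite eq_ia; [case: eqP => [|_] /=; [lia | ring] | lia | lia].
Qed.

Lemma mderiv_P_later z m i : jacobi_free z -> (m <= N)%N -> later_coord m i ->
  mderiv i (P m z) = 0 /\ mderiv i (Pprev m z) = 0.
Proof.
move=> hz; elim: m => [|m IH] hm hi.
  by rewrite /P /Pprev /= -mpolyC1 mderivC mderiv0.
have [dP dPprev] := IH (ltnW hm) (later_coord_succ hi).
rewrite P_succ Pprev_succ; split=> //.
rewrite !(mderivB, mderivM) dP dPprev (mderiv_free_later hz (later_coord_succ hi)).
by rewrite (mderiv_vb_later hm hi) (mderiv_asq_later hm hi); ring.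
Qed.

Lemma mderiv_P_last z m : jacobi_free z -> (m < N)%N ->
  mderiv (ib N m.+1) (P m.+1 z) = - P m z.
Proof.
move=> hz hm; have hi : later_coord m (ib N m.+1) by right; exists m.+1 => //; lia.
have [dP dPprev] := mderiv_P_later hz (ltnW hm) hi.
rewrite P_succ !(mderivB, mderivM) dP dPprev (mderiv_free_later hz hi).
have -> : mderiv (ib N m.+1) (asq m) = 0.
  case: m hm {hi dP dPprev} => [|m] hm; first exact: mderiv0.
  by rewrite /asq expr2 mderivM /va mderivXU ia_neq_ib /=; [ring | lia | lia].
by rewrite /vb mderivXU eqxx /=; ring.
Qed.

Lemma step_relations_P z n : jacobi_free z -> (n < N)%N ->
  step_relations br half (vb R N n.+1) (asq n) (P n z) (Pprev n z).
Proof.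
move=> hz hn.
have dP_ia k : (1 <= k < N)%N -> n.+1 = k \/ n.+1 = k.+1 ->
    mderiv (ia N k) (P n z) = 0 /\ mderiv (ia N k) (Pprev n z) = 0.
  by move=> hk hnk; apply: mderiv_P_later (ltnW hn) _ => //; left; exists k => //; lia.
split.
- by apply: pbr_vb => [|k hk /(dP_ia k hk) []]; first lia.
- by apply: pbr_vb => [|k hk /(dP_ia k hk) []]; first lia.
- case: n hn {dP_ia} => [|m] hn; first exact: (br0l pbrBl).
  rewrite /asq expr2 pbrMl !pbr_va ?Pprev_succ; try lia.
  rewrite !(mderiv_P_later hz (ltnW (ltnW hn)) (later_coord_ib _)).1; try lia.
  by ring.
case: n hn {dP_ia} => [|m] hn.
  by rewrite /asq (br0l pbrBl); ring.
rewrite /asq expr2 pbrMl !pbr_va ?Pprev_succ ?mderiv_P_last //; try lia.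
rewrite (mderiv_P_later hz (ltnW hn) (later_coord_ib _)).1; last lia.
by rewrite -quarter_add; ring.
Qed.

Lemma pbr_vb_asq n : (n < N)%N -> br (vb R N n.+1) (asq n) = half * asq n.
Proof.
case: n => [|m] hn; first by rewrite /asq pbrC (br0l pbrBl) oppr0 mulr0.
rewrite /asq expr2 pbrC pbrMl pbr_va; last lia.
rewrite /vb !mderivXU eq_ib ?eqxx; try lia.
by rewrite -quarter_add /=; case: eqP => [|_] /=; [lia | ring].
Qed.

Lemma bracket_relations_P z w n : jacobi_free z -> jacobi_free w -> (n <= N)%N ->
  bracket_relations br z (P n z) (Pprev n z) w (P n w) (Pprev n w).
Proof.
move=> hz hw; elim: n => [|n IH] hn.
  exact: bracket_relations_init pbrMl pbrBl z w.
rewrite !P_succ !Pprev_succ.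
apply: (bracket_relations_step pbrMl pbrBl pbrC pbrxx half_add) (IH (ltnW hn)).
- by move=> f; apply: pbr_free.
- by move=> f; apply: pbr_free.
- exact: pbr_vb_asq.
- exact: step_relations_P.
- exact: step_relations_P.
Qed.

End JacobiBracket.

Section Evaluation.
Variables (R : realType) (N : nat) (a b : nat -> R).

HB.instance Definition _ :=
  GRing.RMorphism.copy (evpt a b) (comp_mpoly [tuple evpt_var a b i | i < (N.*2).+1]).

Lemma evpt_vx : evpt a b (vx R N) = 'X_(ord0 : 'I_2).
Proof.
rewrite /evpt /vx comp_mpolyXU -tnth_nth tnth_mktuple /evpt_var val_ix ltnn eqxx.
by rewrite ifN //; lia.
Qed.

Lemma evpt_vy : (1 <= N)%N -> evpt a b (vy R N) = 'X_(ord_max : 'I_2).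
Proof.
move=> hN; rewrite /evpt /vy comp_mpolyXU -tnth_nth tnth_mktuple /evpt_var val_iy.
have -> : (iy N == ix N) = false by rewrite -val_eqE /= val_ix val_iy; apply/eqP; lia.
by rewrite !ifN //; lia.
Qed.

End Evaluation.

Theorem theorem2p3 (R : realType) (N : nat) (c : R) (hN : (1 <= N)%N)
  (a b : nat -> R)
  (ha : forall k, (1 <= k < N)%N -> 0 < a k)
  (hb : \sum_(1 <= j < N.+1) b j = c)
  (n : nat) (hn : (1 <= n <= N)%N) :
  let X := vx R N in
  let Y := vy R N in
  let ev := evpt a b in
  [/\ ev (pbr (P n X) (P n Y)) = 0,
      ev (pbr (P n.-1 X) (P n.-1 Y)) = 0 &
      exists Q : {mpoly R[2]},
        ('X_(ord0 : 'I_2) - 'X_(ord_max : 'I_2)) * Q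
          = ev (P n X * P n.-1 Y - P n Y * P n.-1 X)
        /\ 2%:R * ev (pbr (P n X) (P n.-1 Y)) = Q - ev (P n.-1 X * P n.-1 Y)].
Proof.
move=> X Y ev; case: n hn => [//|m] /andP[_ hm] /=.
have [PP PP' PP'_sym CD] :=
  bracket_relations_P (jacobi_free_vx R N) (jacobi_free_vy R N) hm.
rewrite !Pprev_succ in PP' PP'_sym CD.
rewrite /ev PP PP' rmorph0; split=> //.
exists (ev (2%:R * pbr (P m.+1 X) (P m Y) + P m X * P m Y)); split.
  by rewrite -CD /ev rmorphM rmorphB /= evpt_vx (evpt_vy _ _ hN).
by rewrite /ev rmorphD rmorphM rmorph_nat addrK.
Qed.
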